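(* Let the training data $S=(X_i,Y_i)_{i=1}^n$ be (the first $n$ states of) a V-geometrically ergodic Markov chain on $\mathcal{Z}=\mathcal{X}\times\mathcal{Y}$ with stationary distribution $\pi$ and constants $\gamma,\rho,B$ as in the definition below, and let $\alpha\in(0,1)$. For all $\epsilon\in(0,3M]$ and $\delta\in(0,1)$, if the effective sample size $n_e$ satisfies \[ n_e \ge \frac{288M^2}{\epsilon^2}\left(\ln\frac{2}{\delta}+\ln(1+\gamma B e^{-2})+\ln \mathcal{N}\!\left(\mathcal{H},\frac{\epsilon}{24L}\right)\right), \] then \[ \mathbb{P}\left(\sup_{h\in\mathcal{H}\setminus\mathcal{H}_{\gamma^*+\epsilon}} P_n(h)\le \frac{\alpha^{n\epsilon/6}}{\mathcal{V}_{\epsilon/2}}\right)\ge 1-\delta. \]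
   Context: V-geometric ergodicity: Let $\mathcal{Z}$ be a compact subset of $\mathbb{R}^N$ with a $\sigma$-algebra $\mathcal{F}$. For probability measures $P_1,P_2$ on $(\mathcal{Z},\mathcal{F})$, $\|P_1-P_2\|_{TV}=2\sup_{A\in\mathcal{F}}|P_1(A)-P_2(A)|$. A Markov chain $(Z_i)_{i\ge1}$ on $\mathcal{Z}$ with $n$-step transition probabilities $P^n(\cdot\mid z)$ and stationary distribution $\pi$ is V-geometrically ergodic with respect to a measurable $V:\mathcal{Z}\to[1,\infty)$ if there exist $\gamma<\infty$, $\rho<1$, $B<\infty$ such that for all $z\in\mathcal{Z}$ and $n\ge1$, $\|P^n(\cdot\mid z)-\pi\|_{TV}\le\gamma\rho^nV(z)$, and $\int_{\mathcal{Z}}V\,d\pi<B$. Setting: $\mathcal{X}\subset\mathbb{R}^d$ and $\mathcal{Y}\subset\mathbb{R}$ are compact, $\mathcal{Z}=\mathcal{X}\times\mathcal{Y}$. $\mathcal{H}$ is a set of functions $h:\mathcal{X}\to\mathcal{Y}$ contained in a ball of the Hölder space $C^q(\mathcal{X})$ ($q>0$), with norm $\|h\|_{C^q}=\|h\|_\infty+\sup_{x_1\ne x_2}\frac{|h(x_1)-h(x_2)|}{\|x_1-x_2\|^q}$. Constants: $M=\sup_{h\in\mathcal{H}}\max_{(x,y)\in\mathcal{Z}}|h(x)-y|$ and $L=\sup_{h_1\ne h_2\in\mathcal{H}}\max_{(x,y)\in\mathcal{Z}}\frac{||h_1(x)-y|-|h_2(x)-y||}{\|h_1-h_2\|_\infty}$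 (both assumed positive and finite). The covering number $\mathcal{N}(\mathcal{H},\epsilon)$ is the smallest number of balls of radius $\epsilon$ (in $\|\cdot\|_{C^q}$) covering $\mathcal{H}$. Empirical loss $l_S(h)=\frac1n\sum_{i=1}^n|h(X_i)-Y_i|$; expected loss $l(h)=\mathbb{E}_{(X,Y)\sim\pi}|h(X)-Y|$. The effective sample size is $n_e=\left\lfloor \frac{n}{\lceil (8n/\ln(1/\rho))^{1/2}\rceil}\right\rfloor$. Prior and optimal loss: $\mu$ is a probability measure on $\mathcal{H}$; the sets $\mathcal{H}_t=\{h\in\mathcal{H}: l(h)\le t\}$ are $\mu$-measurable for all $t\in\mathbb{R}$. $\gamma^*=\inf\{t:\mu(\mathcal{H}_t)>0\}$, and for $\epsilon>0$, $\mathcal{V}_\epsilon=\mu(\mathcal{H}_{\gamma^*+\epsilon})$ (which is $>0$). Batched weighted average (BWA) algorithm with parameter $\alpha\in(0,1)$: weights $w_n(h)=\alpha^{n\,l_S(h)}$, normalized weights $P_n(h)=w_n(h)/\int_{\mathcal{H}}w_n\,d\mu$, and prediction $\bar h_n(x)=\int_{\mathcal{H}}P_n(h)h(x)\,d\mu(h)$. Known fact (Zou et al. 2012, uniform convergence): under this setting, for all $\epsilon\in(0,3M]$, $\delta\in(0,1)$, if $n_e\ge\frac{8M^2}{\epsilon^2}\big(\ln\frac2\delta+\ln(1+\gamma Be^{-2})+\ln\mathcal{N}(\mathcal{H},\frac{\epsilon}{4L})\big)$, then $\mathbb{P}(\forall h\in\mathcal{H},\ |l_S(h)-l(h)|<\epsilon)\ge1-\delta$.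 *)

From HB Require Import structures.
From mathcomp Require Import all_boot all_order all_algebra.
From mathcomp Require Import all_classical all_reals all_analysis.
Set Implicit Arguments. Unset Strict Implicit. Unset Printing Implicit Defensive.
Import Order.TTheory GRing.Theory Num.Theory.
Import numFieldNormedType.Exports.
Local Open Scope classical_set_scope.
Local Open Scope ring_scope.

Section HypothesisClass.
Variables (R : realType) (dim : nat).

Definition eucl_norm (v : 'rV[R]_dim) : R := Num.sqrt (\sum_i v ord0 i ^+ 2).

Definition sup_norm_on (X : set 'rV[R]_dim) (f : 'rV[R]_dim -> R) : \bar R :=
  ereal_sup [set (`|f x|)%:E | x in X].

Definition holder_norm (X : set 'rV[R]_dim) (q : R) (f : 'rV[R]_dim -> R) : \bar R :=
  (sup_norm_on X f +
   ereal_sup [set (`|f p.1 - f p.2| / (eucl_norm (p.1 - p.2)) `^ q)%:E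
             | p in [set p | X p.1 /\ X p.2 /\ p.1 <> p.2]])%E.

(** Covering number N(H, e): the least number of (closed) balls of radius e
    in the C^q(X) norm covering H (+oo if no finite cover exists). *)
Definition covering_number (X : set 'rV[R]_dim) (q : R)
    (H : set ('rV[R]_dim -> R)) (e : R) : \bar R :=
  ereal_inf [set (k%:R)%:E | k in [set k : nat |
     exists c : 'I_k -> ('rV[R]_dim -> R),
       forall h, H h -> exists i : 'I_k,
         (holder_norm X q (fun x => (h x - c i x)%R) <= e%:E)%E]].

Definition loss_bound (X : set 'rV[R]_dim) (Y : set R)
    (H : set ('rV[R]_dim -> R)) : \bar R :=
  ereal_sup [set (`|t.1 t.2.1 - t.2.2|)%:E
            | t in [set t | H t.1 /\ (X `*` Y) t.2]].

Definition loss_lipschitz (X : set 'rV[R]_dim) (Y : set R)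
    (H : set ('rV[R]_dim -> R)) : \bar R :=
  ereal_sup [set (`| `|t.1.1 t.2.1 - t.2.2| - `|t.1.2 t.2.1 - t.2.2| |
                  / fine (sup_norm_on X (fun x => t.1.1 x - t.1.2 x)))%:E
            | t in [set t | H t.1.1 /\ H t.1.2 /\
                            (exists2 x, X x & t.1.1 x <> t.1.2 x) /\
                            (X `*` Y) t.2]].
End HypothesisClass.

Section MarkovChain.
Context {R : realType} {d : measure_display} {S : measurableType d}.

Fixpoint kstep (K : R.-pker S ~> S) (m : nat) (z : S) (A : set S) : \bar R :=
  match m with
  | 0%N => (\1_A z)%:E
  | m.+1 => (\int[K z]_z' kstep K m z' A)%E
  end.

Fixpoint fdd (K : R.-pker S ~> S) (A : nat -> set S) (m i : nat) (z : S) : \bar R :=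
  match m with
  | 0%N => 1%E
  | m.+1 => (\int[K z]_(z' in A i) fdd K A m i.+1 z')%E
  end.

(** (Z_i)_{i >= 1} is a time-homogeneous Markov chain with initial
    distribution nu and transition kernel K: for every n and measurable
    A_1, ..., A_{n+1},
    P(Z_1 in A_1, ..., Z_{n+1} in A_{n+1})
      = int_{A_1} nu(dz_1) int_{A_2} K(z_1,dz_2) ... int_{A_{n+1}} K(z_n, dz_{n+1}) 1 *)
Definition markov_chain {dO : measure_display} {Omega : measurableType dO}
    (P : probability Omega R) (Zs : nat -> Omega -> S)
    (nu : probability S R) (K : R.-pker S ~> S) : Prop :=
  (forall i, (0 < i)%N -> measurable_fun setT (Zs i)) /\
  forall (n : nat) (A : nat -> set S), (forall i, measurable (A i)) ->
    P (\bigcap_(i in [set i : nat | (1 <= i <= n.+1)%N]) (Zs i @^-1` A i)) =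
    (\int[nu]_(z in A 1%N) fdd K A n 2 z)%E.

Definition stationary (K : R.-pker S ~> S) (pi : probability S R) : Prop :=
  forall A, measurable A -> pi A = (\int[pi]_z K z A)%E.

Definition supported_on (Zset : set S) (m : set S -> \bar R) : Prop :=
  forall A, measurable A -> A `&` Zset = set0 -> m A = 0%E.

Definition tv_dist (m1 m2 : set S -> \bar R) : \bar R :=
  (2%:E * ereal_sup [set `|m1 A - m2 A| | A in measurable])%E.

Definition V_geometrically_ergodic (Zset : set S) (K : R.-pker S ~> S)
    (pi : probability S R) (V : S -> R) (gamma rho B : R) : Prop :=
  measurable_fun setT V /\ (forall z, 1 <= V z) /\ rho < 1 /\
  (forall z, Zset z -> forall n, (1 <= n)%N ->
      (tv_dist (kstep K n z) pi <= (gamma * rho ^+ n * V z)%R%:E)%E) /\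
  (\int[pi]_z (V z)%:E < B%:E)%E.

(** inner probability: P(A) >= p is read as: A contains a measurable event
    of probability >= p (this coincides with P(A) >= p when A is measurable) *)
Definition inner_prob {dO : measure_display} {Omega : measurableType dO}
    (P : probability Omega R) (A : set Omega) : \bar R :=
  ereal_sup [set P E | E in [set E | measurable E /\ E `<=` A]].
End MarkovChain.

Section Learning.
Context {R : realType} {dim : nat}.
Context {dO : measure_display} {Omega : measurableType dO}.
Context {dS : measure_display} {S : measurableType dS}.
Variable (proj : S -> 'rV[R]_dim * R).

Definition emp_loss (n : nat) (Zs : nat -> Omega -> S)
    (h : 'rV[R]_dim -> R) (w : Omega) : R :=
  n%:R^-1 * \sum_(1 <= i < n.+1) `|h (proj (Zs i w)).1 - (proj (Zs i w)).2|.

Definition exp_loss (pi : probability S R) (h : 'rV[R]_dim -> R) : R :=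
  fine (\int[pi]_z (`|h (proj z).1 - (proj z).2|%R)%:E)%E.

Definition Hlevel (pi : probability S R) (H : set ('rV[R]_dim -> R)) (t : R)
  : set ('rV[R]_dim -> R) := [set h | H h /\ exp_loss pi h <= t].

Context {dH : measure_display} {HT : measurableType dH}.
Variable (ev : HT -> ('rV[R]_dim -> R)).

Definition gamma_star (pi : probability S R) (H : set ('rV[R]_dim -> R))
    (mu : probability HT R) : R :=
  inf [set t : R | (0 < mu (ev @^-1` Hlevel pi H t))%E].

Definition Vol (pi : probability S R) (H : set ('rV[R]_dim -> R))
    (mu : probability HT R) (e : R) : R :=
  fine (mu (ev @^-1` Hlevel pi H (gamma_star pi H mu + e))).

Definition bwa_weight (alpha : R) (n : nat) (Zs : nat -> Omega -> S)
    (h : 'rV[R]_dim -> R) (w : Omega) : R :=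
  alpha `^ (n%:R * emp_loss n Zs h w).

Definition bwa_Pn (alpha : R) (n : nat) (Zs : nat -> Omega -> S)
    (H : set ('rV[R]_dim -> R)) (mu : probability HT R)
    (h : 'rV[R]_dim -> R) (w : Omega) : R :=
  bwa_weight alpha n Zs h w /
  fine (\int[mu]_(g in ev @^-1` H) (bwa_weight alpha n Zs (ev g) w)%:E)%E.
End Learning.

Definition n_eff {R : realType} (n : nat) (rho : R) : R :=
  ((Num.floor (n%:R / ((Num.ceil (Num.sqrt (8 * n%:R / ln rho^-1) : R))%:~R : R)
     : R))%:~R : R).

From HB Require Import structures.
From mathcomp Require Import all_boot all_order all_algebra.
From mathcomp Require Import all_classical all_reals all_analysis.
From mathcomp Require Import ring lra.
Import Order.TTheory GRing.Theory Num.Theory.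
Import numFieldNormedType.Exports.
Local Open Scope classical_set_scope.
Local Open Scope ring_scope.

(* On the event that every empirical loss is within eps/6 of the expected
   loss, a hypothesis h with l(h) > gamma^* + eps has weight at most
   alpha^(n (gamma^* + 5 eps/6)), while every hypothesis of
   H_{gamma^* + eps/2} has weight at least alpha^(n (gamma^* + 2 eps/3)), so
   the normalising integral is at least that much times V_{eps/2}, which is
   positive because gamma^* is an infimum of levels of positive prior mass.  The ratio
   is alpha^(n eps/6) / V_{eps/2}, and the uniform convergence bound at
   accuracy eps/6 is exactly the hypothesis on n_e. *)

(* No measurability is needed: nonnegative integrals are suprema over
   simple functions, and the patched functions are compared pointwise. *)
Lemma ge0_le_integral_patch d (T : measurableType d) (R : realType)
    (mu : {measure set T -> \bar R}) (D1 D2 : set T) (f g : T -> \bar R) :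
  (forall x, D1 x -> (0 <= f x)%E) -> (forall x, D2 x -> (0 <= g x)%E) ->
  (forall x, ((f \_ D1) x <= (g \_ D2) x)%E) ->
  (\int[mu]_(x in D1) f x <= \int[mu]_(x in D2) g x)%E.
Proof.
move=> f0 g0 fg; rewrite !ge0_integralE//.
apply: ereal_sup_le => _ [h /= hf <-]; exists h => //= x.
exact: le_trans (hf x) (fg x).
Qed.

Lemma le_inner_prob d (T : measurableType d) (R : realType)
    (P : probability T R) (A B : set T) :
  A `<=` B -> (inner_prob P A <= inner_prob P B)%E.
Proof.
move=> AB; apply: ereal_sup_le => _ [E [mE EA] <-].
by exists E => //; split => //; exact: subset_trans AB.
Qed.

Section BatchedWeightedAverage.
Context {R : realType} {dim : nat}.
Context {dO : measure_display} {Omega : measurableType dO}.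
Context {dS : measure_display} {S : measurableType dS}.
Context {dH : measure_display} {HT : measurableType dH}.
Variables (proj : S -> 'rV[R]_dim * R) (ev : HT -> ('rV[R]_dim -> R)).
Variables (pi : probability S R) (H : set ('rV[R]_dim -> R)).
Variables (mu : probability HT R) (alpha : R) (n : nat).
Variables (Zs : nat -> Omega -> S) (w : Omega).
Hypothesis alpha01 : 0 < alpha < 1.

Local Notation emp_loss h := (emp_loss proj n Zs h w).
Local Notation weight h := (bwa_weight proj alpha n Zs h w).
Local Notation bwa_norm :=
  (\int[mu]_(g in ev @^-1` H) (bwa_weight proj alpha n Zs (ev g) w)%:E)%E.

Let alpha_gt0 : 0 < alpha. Proof. by case/andP: alpha01. Qed.
Let alpha_gt0_le1 : 0 < alpha <= 1.
Proof. by case/andP: alpha01 => -> /ltW. Qed.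

Lemma emp_loss_ge0 h : 0 <= emp_loss h.
Proof. by rewrite mulr_ge0 ?invr_ge0 ?ler0n //; apply: sumr_ge0. Qed.

Lemma bwa_weight_le1 h : weight h <= 1.
Proof.
rewrite /bwa_weight -[leRHS](powRr0 alpha); apply: ger_powR => //.
by rewrite mulr_ge0 ?ler0n ?emp_loss_ge0.
Qed.

Lemma bwa_weight_le r h : r <= emp_loss h -> weight h <= alpha `^ (n%:R * r).
Proof. by move=> rh; apply: ger_powR => //; rewrite ler_wpM2l ?ler0n. Qed.

Lemma bwa_weight_ge r h : emp_loss h <= r -> alpha `^ (n%:R * r) <= weight h.
Proof. by move=> hr; apply: ger_powR => //; rewrite ler_wpM2l ?ler0n. Qed.

Lemma bwa_norm_le1 : (bwa_norm <= 1)%E.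
Proof.
apply: (@le_trans _ _ (\int[mu]_(g in setT) (cst 1%E) g)%E).
  apply: ge0_le_integral_patch => [g _|g _|g]; rewrite ?lee_fin ?powR_ge0 //.
  by rewrite /patch in_setT; case: ifPn => _; rewrite lee_fin ?bwa_weight_le1.
by rewrite integral_cst // mul1e probability_le1.
Qed.

Lemma bwa_norm_ge (A : set HT) r :
  measurable A -> A `<=` ev @^-1` H -> (forall g, A g -> emp_loss (ev g) <= r) ->
  ((alpha `^ (n%:R * r))%:E * mu A <= bwa_norm)%E.
Proof.
move=> mA AH Ar; rewrite -integral_cst //.
apply: ge0_le_integral_patch => [g _|g _|g]; rewrite ?lee_fin ?powR_ge0 //.
rewrite /patch; case: ifPn => [/set_mem Ag|_]; last first.
  by case: ifPn => _; rewrite lee_fin ?powR_ge0.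
by rewrite mem_set ?lee_fin ?bwa_weight_ge ?Ar //; exact: AH.
Qed.

Lemma bwa_Pn_le_level (t s dev : R) h :
  measurable (ev @^-1` Hlevel proj pi H t) ->
  (0 < mu (ev @^-1` Hlevel proj pi H t))%E ->
  (forall g, H g -> `|emp_loss g - exp_loss proj pi g| < dev) ->
  H h -> s <= exp_loss proj pi h ->
  bwa_Pn proj ev alpha n Zs H mu h w <=
    alpha `^ (n%:R * (s - t - 2 * dev)) / fine (mu (ev @^-1` Hlevel proj pi H t)).
Proof.
set A := ev @^-1` Hlevel proj pi H t => mA muA_gt0 dev_bound Hh sh.
have muA_fin : mu A \is a fin_num.
  by rewrite ge0_fin_numE // (le_lt_trans (probability_le1 mu mA)) ?ltey.
have VA_gt0 : 0 < fine (mu A) by rewrite fine_gt0 // muA_gt0 -ge0_fin_numE.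
have norm_fin : bwa_norm \is a fin_num.
  rewrite ge0_fin_numE ?(le_lt_trans bwa_norm_le1) ?ltey //.
  by apply: integral_ge0 => g _; rewrite lee_fin powR_ge0.
have norm_ge : alpha `^ (n%:R * (t + dev)) * fine (mu A) <= fine bwa_norm.
  rewrite -lee_fin EFinM fineK // fineK //; apply: bwa_norm_ge => // [g []//|g [Hg lg]].
  by have /ltr_normlP[_] := dev_bound _ Hg; lra.
have norm_gt0 : 0 < fine bwa_norm.
  by apply: lt_le_trans norm_ge; rewrite mulr_gt0 ?powR_gt0.
rewrite /bwa_Pn ler_pdivrMr //.
have cst_ge0 : 0 <= alpha `^ (n%:R * (s - t - 2 * dev)) / fine (mu A).
  by rewrite divr_ge0 ?powR_ge0 ?ltW.
have dev_h : s - dev <= emp_loss h.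
  by have /ltr_normlP[hdev _] := dev_bound _ Hh; lra.
apply: (le_trans (bwa_weight_le _ _ dev_h)).
apply: le_trans (ler_wpM2l cst_ge0 norm_ge).
rewrite mulrA mulrAC divfK ?gt_eqF // -powRD ?(gt_eqF alpha_gt0) ?implybT // -mulrDr.
by apply: ger_powR => //; rewrite ler_wpM2l ?ler0n //; lra.
Qed.

End BatchedWeightedAverage.

Section GammaStar.
Context {R : realType} {dim : nat}.
Context {dS : measure_display} {S : measurableType dS}.
Context {dH : measure_display} {HT : measurableType dH}.
Variables (proj : S -> 'rV[R]_dim * R) (ev : HT -> ('rV[R]_dim -> R)).
Variables (pi : probability S R) (H : set ('rV[R]_dim -> R)).
Variable (mu : probability HT R).
Hypothesis muH : mu (ev @^-1` H) = 1%E.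
Hypothesis measurable_level : forall t, measurable (ev @^-1` Hlevel proj pi H t).

Local Notation level t := (ev @^-1` Hlevel proj pi H t).

Lemma bigcup_Hlevel : ev @^-1` H = \bigcup_k level k%:R.
Proof.
apply/seteqP; split=> [g Hg|g [k _ []//]].
by exists (Num.truncn (exp_loss proj pi (ev g))).+1 => //; split => //; rewrite ltW ?truncnS_gt.
Qed.

Lemma Hlevel_gt0 : exists t, (0 < mu (level t))%E.
Proof.
apply: contrapT => all_null.
have null_k k : mu.-negligible (level k%:R).
  apply/negligibleP => //; apply/eqP; rewrite eq_le measure_ge0 andbT leNgt.
  by apply/negP => pos; apply: all_null; exists k%:R.
have mH : measurable (ev @^-1` H).
  by rewrite bigcup_Hlevel; apply: bigcupT_measurable.
have := negligible_bigcup null_k; rewrite -bigcup_Hlevel => /(negligibleP _ mH) mu0.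
by have [] := etrans (esym muH) mu0; apply/eqP; rewrite oner_eq0.
Qed.

Lemma Hlevel_gamma_star_gt0 e :
  0 < e -> (0 < mu (level (gamma_star proj ev pi H mu + e)))%E.
Proof.
move=> e_gt0; have [t t_pos] := Hlevel_gt0.
have [s s_pos lt_s] : exists2 s, (0 < mu (level s))%E & s < gamma_star proj ev pi H mu + e.
  by apply: inf_lt; [exists t | rewrite ltrDl].
apply: (lt_le_trans s_pos); rewrite le_measure ?inE // => g [Hg lg].
by split => //; rewrite (le_trans lg) ?ltW.
Qed.

End GammaStar.
Theorem lemma2
  (R : realType) (dim : nat)
  (X : set 'rV[R]_dim) (Y : set R)
  (q : R) (H : set ('rV[R]_dim -> R)) (M L : R)
  (* sigma-algebra on the state space Z = X x Y (generated by F) *)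
  (F : set (set ('rV[R]_dim * R)))
  (dO : measure_display) (Omega : measurableType dO) (P : probability Omega R)
  (* the chain (Z_i)_{i >= 1}, Z_i = (X_i, Y_i) *)
  (Zs : nat -> Omega -> g_sigma_algebraType F)
  (nu : probability (g_sigma_algebraType F) R)
  (K : R.-pker (g_sigma_algebraType F) ~> (g_sigma_algebraType F))
  (pi : probability (g_sigma_algebraType F) R)
  (V : g_sigma_algebraType F -> R) (gamma rho B : R)
  (* sigma-algebra on the hypothesis functions (generated by G) and prior mu *)
  (G : set (set ('rV[R]_dim -> R)))
  (mu : probability (g_sigma_algebraType G) R)
  (alpha : R) :
  compact X -> compact Y -> 0 < q ->
  (forall h, H h -> forall x, X x -> Y (h x)) ->
  (exists r : R, forall h, H h -> (holder_norm X q h <= r%:E)%E) ->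
  M%:E = loss_bound X Y H -> 0 < M ->
  L%:E = loss_lipschitz X Y H -> 0 < L ->
  markov_chain P Zs nu K ->
  (forall i w, (0 < i)%N -> (X `*` Y) (Zs i w : 'rV[R]_dim * R)) ->
  supported_on (X `*` Y : set (g_sigma_algebraType F)) nu ->
  (forall z, (X `*` Y) (z : 'rV[R]_dim * R) ->
     supported_on (X `*` Y : set (g_sigma_algebraType F)) (K z)) ->
  supported_on (X `*` Y : set (g_sigma_algebraType F)) pi ->
  stationary K pi ->
  V_geometrically_ergodic (X `*` Y : set (g_sigma_algebraType F)) K pi V gamma rho B ->
  0 < rho ->
  mu (H : set (g_sigma_algebraType G)) = 1%E ->
  (forall t, measurable
     (Hlevel (fun z : g_sigma_algebraType F => z : 'rV[R]_dim * R) pi H t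
       : set (g_sigma_algebraType G))) ->
  0 < alpha < 1 ->
  (* Known fact (Zou et al. 2012): uniform convergence of empirical losses *)
  (forall (n : nat) (eps delta : R), 0 < eps <= 3 * M -> 0 < delta < 1 ->
     (exists2 N : nat, covering_number X q H (eps / (4 * L)) = (N%:R)%:E &
        8 * M ^+ 2 / eps ^+ 2 *
          (ln (2 / delta) + ln (1 + gamma * B * expR (-2)) + ln N%:R)
        <= n_eff n rho) ->
     ((1 - delta)%:E <= inner_prob P [set w | forall h, H h ->
        (`|emp_loss (fun z : g_sigma_algebraType F => z : 'rV[R]_dim * R) n Zs h w
          - exp_loss (fun z : g_sigma_algebraType F => z : 'rV[R]_dim * R) pi h|
        < eps)%R])%E) ->
  forall (n : nat) (eps delta : R), 0 < eps <= 3 * M -> 0 < delta < 1 ->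
  (exists2 N : nat, covering_number X q H (eps / (24 * L)) = (N%:R)%:E &
     288 * M ^+ 2 / eps ^+ 2 *
       (ln (2 / delta) + ln (1 + gamma * B * expR (-2)) + ln N%:R)
     <= n_eff n rho) ->
  ((1 - delta)%:E <= inner_prob P [set w |
     ereal_sup [set (bwa_Pn (fun z : g_sigma_algebraType F => z : 'rV[R]_dim * R)
                       (fun g : g_sigma_algebraType G => g : 'rV[R]_dim -> R)
                       alpha n Zs H mu h w)%:E
               | h in H `\` Hlevel (fun z : g_sigma_algebraType F => z : 'rV[R]_dim * R)
                   pi H (gamma_star (fun z : g_sigma_algebraType F => z : 'rV[R]_dim * R)
                     (fun g : g_sigma_algebraType G => g : 'rV[R]_dim -> R) pi H mu + eps)%R]
     <= (alpha `^ (n%:R * eps / 6) /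
         Vol (fun z : g_sigma_algebraType F => z : 'rV[R]_dim * R)
             (fun g : g_sigma_algebraType G => g : 'rV[R]_dim -> R) pi H mu (eps / 2))%R%:E])%E.
Proof.
move=> _ _ _ _ _ _ _ _ L_gt0 _ _ _ _ _ _ _ _ muH measurable_level alpha01
  uniform_convergence n eps delta /andP[eps_gt0 eps_le] delta01 [N coverN sizeN].
set pr := fun z : g_sigma_algebraType F => z : 'rV[R]_dim * R.
set ev := fun g : g_sigma_algebraType G => g : 'rV[R]_dim -> R.
set gs := gamma_star pr ev pi H mu.
have eps6 : 0 < eps / 6 <= 3 * M.
  by rewrite divr_gt0 //= (le_trans _ eps_le) // ler_pdivrMr //; lra.
have cover_radius : eps / 6 / (4 * L) = eps / (24 * L).
  by field; rewrite gt_eqF.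
have sample_const : 8 * M ^+ 2 / (eps / 6) ^+ 2 = 288 * M ^+ 2 / eps ^+ 2.
  by field; rewrite gt_eqF.
apply: le_trans (uniform_convergence n (eps / 6) delta eps6 delta01 _) _.
  by exists N; rewrite ?cover_radius ?sample_const.
apply: le_inner_prob => w dev_w; apply: ge_ereal_sup => _ [h [Hh not_level] <-].
have loss_h : gs + eps <= exp_loss pr pi h.
  by rewrite leNgt; apply/negP => lh; apply: not_level; split => //; exact: ltW.
have -> : n%:R * eps / 6 = n%:R * (gs + eps - (gs + eps / 2) - 2 * (eps / 6)).
  by field.
rewrite lee_fin; apply: bwa_Pn_le_level loss_h => //; first exact: measurable_level.
by apply: Hlevel_gamma_star_gt0 => //; rewrite divr_gt0.
Qed.
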